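(* Let $X$ be a regular Lindelöf $\Sigma$-space. If $X$ is homeomorphic to a subspace of a separable Hausdorff space, then $w(X)\leq\mathfrak c$.
   Context: A Hausdorff space $X$ is a Lindelöf $\Sigma$-space if there are families $\mathcal F$ and $\mathcal C$ of closed subsets of $X$ such that $\mathcal F$ is countable, every element of $\mathcal C$ is compact, $X=\bigcup\mathcal C$, and for every $C\in\mathcal C$ and every open $U\supseteq C$ there is $F\in\mathcal F$ with $C\subseteq F\subseteq U$. $w$ weight, $\mathfrak c=2^\omega$. *)

From Stdlib Require Import List.

Set Implicit Arguments.

Record TopSpace := {
  carrier :> Type;
  is_open : (carrier -> Prop) -> Prop;
  open_full : is_open (fun _ => True);
  open_inter : forall U V, is_open U -> is_open V -> is_open (fun x => U x /\ V x);
  open_union : forall F : (carrier -> Prop) -> Prop,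
      (forall U, F U -> is_open U) -> is_open (fun x => exists U, F U /\ U x)
}.

Definition subset {T : Type} (A B : T -> Prop) : Prop := forall x, A x -> B x.

Definition is_closed (X : TopSpace) (A : X -> Prop) : Prop :=
  is_open X (fun x => ~ A x).

Definition compact (X : TopSpace) (K : X -> Prop) : Prop :=
  forall Ucal : (X -> Prop) -> Prop,
    (forall U, Ucal U -> is_open X U) ->
    (forall x, K x -> exists U, Ucal U /\ U x) ->
    exists l : list (X -> Prop),
      (forall U, In U l -> Ucal U) /\
      (forall x, K x -> exists U, In U l /\ U x).

Definition hausdorff (X : TopSpace) : Prop :=
  forall x y : X, x <> y ->
    exists U V, is_open X U /\ is_open X V /\ U x /\ V y /\
                (forall z, U z -> V z -> False).

Definition regular (X : TopSpace) : Prop :=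
  forall (x : X) (A : X -> Prop), is_closed X A -> ~ A x ->
    exists U V, is_open X U /\ is_open X V /\ U x /\ subset A V /\
                (forall z, U z -> V z -> False).

(* Lindelöf Sigma-space (as in the paper; Hausdorff is part of the definition):
   a countable family F (indexed by nat) of closed sets and a family Ccal of
   compact closed sets covering X such that every C in Ccal and open U ⊇ C
   admit some F n with C ⊆ F n ⊆ U. *)
Definition lindelof_sigma (X : TopSpace) : Prop :=
  hausdorff X /\
  exists (F : nat -> (X -> Prop)) (Ccal : (X -> Prop) -> Prop),
    (forall n, is_closed X (F n)) /\
    (forall C, Ccal C -> is_closed X C /\ compact X C) /\
    (forall x : X, exists C, Ccal C /\ C x) /\
    (forall C U, Ccal C -> is_open X U -> subset C U ->
       exists n, subset C (F n) /\ subset (F n) U).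

Definition countable_set {T : Type} (D : T -> Prop) : Prop :=
  exists g : T -> nat, forall x y, D x -> D y -> g x = g y -> x = y.

Definition dense (Y : TopSpace) (D : Y -> Prop) : Prop :=
  forall U, is_open Y U -> (exists y, U y) -> exists y, U y /\ D y.

Definition separable (Y : TopSpace) : Prop :=
  exists D : Y -> Prop, countable_set D /\ dense Y D.

Definition continuous (X Y : TopSpace) (f : X -> Y) : Prop :=
  forall V, is_open Y V -> is_open X (fun x => V (f x)).

Definition embedding (X Y : TopSpace) (f : X -> Y) : Prop :=
  (forall x x', f x = f x' -> x = x') /\
  continuous X Y f /\
  (forall U, is_open X U ->
     exists V, is_open Y V /\ forall x, U x <-> V (f x)).

(* w(X) <= c: there is a base of X indexed by (nat -> bool) (a set of size c;
   repetitions allowed, so this says the weight is at most c). *)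
Definition weight_le_c (X : TopSpace) : Prop :=
  exists B : (nat -> bool) -> (X -> Prop),
    (forall i, is_open X (B i)) /\
    (forall U x, is_open X U -> U x -> exists i, B i x /\ subset (B i) U).

From Stdlib Require Import List Classical FunctionalExtensionality PropExtensionality ClassicalEpsilon Cantor.

(* Let D be a countable dense subset of the separable space Y containing X, and let
   (F n) be the countable network of the Lindelöf Sigma-structure. For each n pick an
   open G_n of Y; the whole sequence (D ∩ G_n)_n is coded by a single b : nat -> bool,
   and b determines the open set B_b = interior { x | forall n, x ∈ F n -> x ∈ cl_Y (D ∩ G_n) }.
   Since cl_Y (D ∩ G_n) = cl_Y G_n, given x ∈ U we may choose, by regularity, an open V
   and a closed H with x ∈ V ⊆ H ⊆ U, and then G_n ⊇ F n ∩ H with F n ∩ cl G_n ⊆ U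
   whenever such a G_n exists; then x ∈ V ⊆ B_b. Conversely, a point y ∉ U lies in a compact
   C of the cover, and separating the compact sets C ∩ H and C \ U in the Hausdorff space Y
   yields, via the network property, some n with y ∈ F n for which the choice of G_n
   succeeded, so y ∉ B_b. *)

Lemma is_open_ext (X : TopSpace) (A B : X -> Prop) :
  is_open X A -> (forall x, A x <-> B x) -> is_open X B.
Proof.
  intros HA HAB.
  replace B with A; [exact HA |].
  apply functional_extensionality; intro x; apply propositional_extensionality, HAB.
Qed.

Lemma is_closed_compl_open (X : TopSpace) (U : X -> Prop) :
  is_open X U -> is_closed X (fun x => ~ U x).
Proof.
  intro HU; apply (is_open_ext _ _ _ HU); intro x; split; [tauto | apply NNPP].
Qed.

Lemma is_open_or (X : TopSpace) (A B : X -> Prop) :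
  is_open X A -> is_open X B -> is_open X (fun x => A x \/ B x).
Proof.
  intros HA HB.
  apply is_open_ext with (A := fun x => exists U, (U = A \/ U = B) /\ U x).
  - apply open_union; intros U [-> | ->]; assumption.
  - intro x; split.
    + intros [U [[-> | ->] HU]]; auto.
    + intros [H | H]; [exists A | exists B]; auto.
Qed.

Lemma is_open_indexed_union (X : TopSpace) (I : Type) (P : I -> Prop) (G : I -> X -> Prop) :
  (forall i, P i -> is_open X (G i)) -> is_open X (fun x => exists i, P i /\ G i x).
Proof.
  intro HG.
  apply is_open_ext with (A := fun x => exists U, (exists i, P i /\ U = G i) /\ U x).
  - apply open_union; intros U [i [Pi ->]]; auto.
  - intro x; split.
    + intros [U [[i [Pi ->]] Ux]]; eauto.
    + intros [i [Pi Gx]]; eauto.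
Qed.

Lemma is_open_list_inter (X : TopSpace) (I : Type) (l : list I) (G : I -> X -> Prop) :
  (forall i, is_open X (G i)) -> is_open X (fun x => forall i, In i l -> G i x).
Proof.
  intro HG; induction l as [| a l IH].
  - apply (is_open_ext _ _ _ (open_full X)); intro x; split; [intros _ i [] | auto].
  - apply is_open_ext with (A := fun x => G a x /\ forall i, In i l -> G i x).
    + apply open_inter; auto.
    + intro x; split.
      * intros [Ga Gl] i [<- | Hi]; auto.
      * intro H; split; [apply H; left | intros i Hi; apply H; right]; auto.
Qed.

Lemma list_choice (A B : Type) (R : A -> B -> Prop) (l : list A) :
  (forall a, In a l -> exists b, R a b) ->
  exists l' : list B, forall a, In a l -> exists b, In b l' /\ R a b.
Proof.
  induction l as [| a l IH]; intro H.
  - exists nil; intros a [].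
  - destruct (H a (or_introl eq_refl)) as [b Rab].
    destruct IH as [l' Hl']; [intros a' Ha'; apply H; right; exact Ha' |].
    exists (b :: l'); intros a' [<- | Ha'].
    + exists b; split; [left |]; auto.
    + destruct (Hl' a' Ha') as [b' [Hb' Rb']]; exists b'; split; [right |]; auto.
Qed.

Lemma list_filter_prop (A : Type) (P : A -> Prop) (l : list A) :
  exists l' : list A, forall a, In a l' <-> In a l /\ P a.
Proof.
  induction l as [| a l [l' Hl']].
  - exists nil; intro a; simpl; tauto.
  - destruct (classic (P a)) as [Pa | nPa].
    + exists (a :: l'); intro b; simpl; rewrite Hl'; split.
      * intros [<- | [Hb Pb]]; auto.
      * intros [[<- | Hb] Pb]; auto.
    + exists l'; intro b; simpl; rewrite Hl'; split.
      * intros [Hb Pb]; auto.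
      * intros [[<- | Hb] Pb]; [contradiction | auto].
Qed.

Definition closure (X : TopSpace) (A : X -> Prop) (x : X) : Prop :=
  forall O, is_open X O -> O x -> exists y, O y /\ A y.

Definition interior (X : TopSpace) (A : X -> Prop) (x : X) : Prop :=
  exists O, is_open X O /\ subset O A /\ O x.

Section ClosureInterior.

Variable X : TopSpace.

Lemma subset_closure (A : X -> Prop) : subset A (closure X A).
Proof. intros x Ax O _ Ox; eauto. Qed.

Lemma closure_monotone (A B : X -> Prop) : subset A B -> subset (closure X A) (closure X B).
Proof.
  intros AB x Hx O HO Ox.
  destruct (Hx O HO Ox) as [y [Oy Ay]]; eauto.
Qed.

Lemma not_closure_disjoint_open (A V : X -> Prop) (x : X) :
  is_open X V -> V x -> (forall y, V y -> A y -> False) -> ~ closure X A x.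
Proof.
  intros HV Vx HVA Hx.
  destruct (Hx V HV Vx) as [y [Vy Ay]]; exact (HVA y Vy Ay).
Qed.

Lemma is_open_not_closure (A : X -> Prop) : is_open X (fun x => ~ closure X A x).
Proof.
  apply is_open_ext with
    (A := fun x => exists O, (is_open X O /\ forall y, O y -> ~ A y) /\ O x).
  - apply open_union; intros O [HO _]; exact HO.
  - intro x; split.
    + intros [O [[HO HOA] Ox]].
      apply (not_closure_disjoint_open A O x HO Ox HOA).
    + intro Hx; apply NNPP; intro Hn; apply Hx; intros O HO Ox.
      apply NNPP; intro HOA; apply Hn.
      exists O; split; [split; [exact HO | intros y Oy Ay; apply HOA; eauto] | exact Ox].
Qed.

Lemma not_closure_list_union (I : Type) (l : list I) (G : I -> X -> Prop) (x : X) :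
  (forall i, In i l -> ~ closure X (G i) x) ->
  ~ closure X (fun y => exists i, In i l /\ G i y) x.
Proof.
  intro Hx.
  apply (not_closure_disjoint_open _ (fun y => forall i, In i l -> ~ closure X (G i) y)).
  - apply is_open_list_inter; intro i; apply is_open_not_closure.
  - exact Hx.
  - intros y Hy [i [Hi Giy]]; exact (Hy i Hi (subset_closure (G i) y Giy)).
Qed.

Lemma closure_dense_inter_open (D G : X -> Prop) :
  dense X D -> is_open X G -> subset G (closure X (fun y => D y /\ G y)).
Proof.
  intros HD HG x Gx O HO Ox.
  destruct (HD (fun y => O y /\ G y)) as [y [[Oy Gy] Dy]].
  - apply open_inter; assumption.
  - exists x; auto.
  - eauto.
Qed.

Lemma is_open_interior (A : X -> Prop) : is_open X (interior X A).
Proof.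
  apply is_open_ext with (A := fun x => exists O, (is_open X O /\ subset O A) /\ O x).
  - apply open_union; intros O [HO _]; exact HO.
  - intro x; split; intros [O H]; exists O; tauto.
Qed.

Lemma interior_subset (A : X -> Prop) : subset (interior X A) A.
Proof. intros x [O [_ [OA Ox]]]; auto. Qed.

Lemma regular_closed_nbhd (U : X -> Prop) (x : X) :
  regular X -> is_open X U -> U x ->
  exists V H, is_open X V /\ V x /\ is_closed X H /\ subset V H /\ subset H U.
Proof.
  intros Hreg HU Ux.
  destruct (Hreg x (fun z => ~ U z)) as [V [W [HV [HW [Vx [nUW VW]]]]]].
  - apply is_closed_compl_open, HU.
  - tauto.
  - exists V, (fun z => ~ W z); split; [exact HV |]; split; [exact Vx |].
    split; [| split].
    + apply is_closed_compl_open, HW.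
    + intros z Vz Wz; exact (VW z Vz Wz).
    + intros z nWz; apply NNPP; intro nUz; exact (nWz (nUW z nUz)).
Qed.

End ClosureInterior.

Lemma compact_indexed_subcover (X : TopSpace) (K : X -> Prop) (I : Type) (G : I -> X -> Prop) :
  compact X K -> (forall i, is_open X (G i)) -> (forall x, K x -> exists i, G i x) ->
  exists l : list I, forall x, K x -> exists i, In i l /\ G i x.
Proof.
  intros HK HG Hcov.
  destruct (HK (fun O => exists i, O = G i)) as [l [Hl Hlcov]].
  - intros U [i ->]; auto.
  - intros x Kx; destruct (Hcov x Kx) as [i Gx]; eauto.
  - destruct (list_choice _ _ (fun O i => O = G i) l Hl) as [li Hli].
    exists li; intros x Kx.
    destruct (Hlcov x Kx) as [O [HO Ox]].
    destruct (Hli O HO) as [i [Hi ->]]; eauto.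
Qed.

Lemma compact_inter_closed (X : TopSpace) (C A : X -> Prop) :
  compact X C -> is_closed X A -> compact X (fun x => C x /\ A x).
Proof.
  intros HC HA Ucal HU Hcov.
  destruct (HC (fun O => Ucal O \/ O = (fun x => ~ A x))) as [l [Hl Hlcov]].
  - intros O [HO | ->]; auto.
  - intros x Cx; destruct (classic (A x)) as [Ax | nAx].
    + destruct (Hcov x (conj Cx Ax)) as [U [HU' Ux]]; eauto.
    + exists (fun x => ~ A x); auto.
  - destruct (list_filter_prop _ Ucal l) as [l' Hl'].
    exists l'; split.
    + intros O HO; apply Hl', HO.
    + intros x [Cx Ax]; destruct (Hlcov x Cx) as [O [HO Ox]].
      destruct (Hl O HO) as [UO | ->]; [exists O; rewrite Hl'; auto | contradiction].
Qed.

Lemma compact_image (X Y : TopSpace) (f : X -> Y) (K : X -> Prop) :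
  continuous X Y f -> compact X K -> compact Y (fun y => exists x, K x /\ f x = y).
Proof.
  intros Hf HK Ucal HU Hcov.
  destruct (compact_indexed_subcover X K {U | Ucal U} (fun i x => proj1_sig i (f x)) HK)
    as [li Hli].
  - intro i; apply Hf, HU, (proj2_sig i).
  - intros x Kx; destruct (Hcov (f x) (ex_intro _ x (conj Kx eq_refl))) as [U [UU Ufx]].
    exists (exist _ U UU); exact Ufx.
  - exists (map (@proj1_sig _ _) li); split.
    + intros U HU'; apply in_map_iff in HU' as [i [<- _]]; exact (proj2_sig i).
    + intros y [x [Kx <-]]; destruct (Hli x Kx) as [i [Hi Hfx]].
      exists (proj1_sig i); split; [apply in_map |]; assumption.
Qed.

Section HausdorffSeparation.

Variables (Y : TopSpace) (HY : hausdorff Y).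

Lemma hausdorff_separate_point_compact (K : Y -> Prop) (p : Y) :
  compact Y K -> ~ K p ->
  exists G, is_open Y G /\ G p /\ forall k, K k -> ~ closure Y G k.
Proof.
  intros HK nKp.
  set (I := {q : (Y -> Prop) * (Y -> Prop) | is_open Y (fst q) /\ is_open Y (snd q) /\
              fst q p /\ forall y, fst q y -> snd q y -> False}).
  destruct (compact_indexed_subcover Y K I (fun i => snd (proj1_sig i)) HK) as [l Hl].
  - intro i; exact (proj1 (proj2 (proj2_sig i))).
  - intros k Kk.
    destruct (HY p k) as [U [V [HU [HV [Up [Vk UV]]]]]]; [intros ->; contradiction |].
    exists (exist _ (U, V) (conj HU (conj HV (conj Up UV))) : I); exact Vk.
  - exists (fun y => forall i, In i l -> fst (proj1_sig i) y); repeat split.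
    + apply is_open_list_inter; intro i; exact (proj1 (proj2_sig i)).
    + intros i _; exact (proj1 (proj2 (proj2 (proj2_sig i)))).
    + intros k Kk; destruct (Hl k Kk) as [i [Hi Vk]].
      destruct (proj2_sig i) as [_ [HV [_ UV]]].
      apply (not_closure_disjoint_open Y _ _ k HV Vk).
      intros y Vy Gy; exact (UV y (Gy i Hi) Vy).
Qed.

Lemma hausdorff_separate_compacts (K1 K2 : Y -> Prop) :
  compact Y K1 -> compact Y K2 -> (forall y, K1 y -> K2 y -> False) ->
  exists G, is_open Y G /\ subset K1 G /\ forall k, K2 k -> ~ closure Y G k.
Proof.
  intros HK1 HK2 K12.
  set (I := {G : Y -> Prop | is_open Y G /\ forall k, K2 k -> ~ closure Y G k}).
  destruct (compact_indexed_subcover Y K1 I (@proj1_sig _ _) HK1) as [l Hl].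
  - intro i; exact (proj1 (proj2_sig i)).
  - intros y K1y.
    destruct (hausdorff_separate_point_compact K2 y HK2 (K12 y K1y)) as [G [HG [Gy HGK2]]].
    exists (exist _ G (conj HG HGK2)); exact Gy.
  - exists (fun y => exists i, In i l /\ proj1_sig i y); repeat split.
    + apply is_open_indexed_union; intros i _; exact (proj1 (proj2_sig i)).
    + exact Hl.
    + intros k K2k; apply not_closure_list_union; intros i _; exact (proj2 (proj2_sig i) k K2k).
Qed.

End HausdorffSeparation.

Lemma encode_countable_family (T : Type) (D : T -> Prop) (code : T -> nat) (S : nat -> T -> Prop) :
  (forall d d', D d -> D d' -> code d = code d' -> d = d') ->
  exists b : nat -> bool, forall n d, D d -> (b (Cantor.to_nat (n, code d)) = true <-> S n d).
Proof.
  intro code_inj.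
  set (P := fun m => exists n d, D d /\ S n d /\ m = Cantor.to_nat (n, code d)).
  exists (fun m => if excluded_middle_informative (P m) then true else false).
  intros n d Dd.
  destruct (excluded_middle_informative _) as [[n' [d' [Dd' [Sd' E]]]] | nP]; split;
    try discriminate; auto.
  - intros _.
    apply (f_equal Cantor.of_nat) in E; rewrite !Cantor.cancel_of_to in E.
    injection E as <- Ec; rewrite (code_inj d d' Dd Dd' Ec); exact Sd'.
  - intro Sd; exfalso; apply nP; exists n, d; auto.
Qed.

Section CantorIndexedBase.

Variables (X Y : TopSpace) (f : X -> Y).
Hypotheses (HY : hausdorff Y) (f_cont : continuous X Y f)
  (f_inj : forall x x', f x = f x' -> x = x').
Variables (F : nat -> X -> Prop) (Ccal : (X -> Prop) -> Prop).
Hypotheses (Ccal_compact : forall C, Ccal C -> compact X C)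
  (Ccal_cover : forall x, exists C, Ccal C /\ C x)
  (F_network : forall C U, Ccal C -> is_open X U -> subset C U ->
                 exists n, subset C (F n) /\ subset (F n) U).

Definition covers_trace (n : nat) (H : X -> Prop) (G : Y -> Prop) : Prop :=
  is_open Y G /\ forall z, F n z -> H z -> G (f z).

Definition separating_open (n : nat) (H U : X -> Prop) (G : Y -> Prop) : Prop :=
  covers_trace n H G /\ forall z, F n z -> closure Y G (f z) -> U z.

Lemma exists_separating_open (H U : X -> Prop) (y : X) :
  is_open X U -> is_closed X H -> subset H U -> ~ U y ->
  exists n, F n y /\ exists G, separating_open n H U G.
Proof.
  intros HU HH HU_H nUy.
  destruct (Ccal_cover y) as [C [CC Cy]].
  set (image := fun A : X -> Prop => fun w => exists z, A z /\ f z = w).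
  destruct (hausdorff_separate_compacts Y HY (image (fun z => C z /\ H z))
              (image (fun z => C z /\ ~ U z))) as [G [HG [HGH HGU]]].
  - apply compact_image, compact_inter_closed; auto.
  - apply compact_image, compact_inter_closed; [auto | auto | apply is_closed_compl_open, HU].
  - intros w [a [[_ Ha] <-]] [b [[_ nUb] Efab]].
    apply nUb; rewrite (f_inj b a Efab); exact (HU_H a Ha).
  - set (W := fun z => (~ H z \/ G (f z)) /\ (~ closure Y G (f z) \/ U z)).
    assert (HW : is_open X W).
    { apply open_inter; apply is_open_or;
        [exact HH | apply (f_cont G), HG | | exact HU].
      apply (f_cont (fun w => ~ closure Y G w)), is_open_not_closure. }
    assert (CW : subset C W).
    { intros z Cz; split.
      - destruct (classic (H z)); [right; apply HGH; exists z | left]; auto.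
      - destruct (classic (U z)); [right | left; apply HGU; exists z]; auto. }
    destruct (F_network C W CC HW CW) as [n [CFn FnW]].
    exists n; split; [exact (CFn y Cy) |].
    exists G; repeat split; [exact HG | |]; intros z Fz; destruct (FnW z Fz); tauto.
Qed.

Variables (D : Y -> Prop) (code : Y -> nat).
Hypotheses (code_inj : forall d d', D d -> D d' -> code d = code d' -> d = d')
  (D_dense : dense Y D).

Definition coded_subset (b : nat -> bool) (n : nat) (d : Y) : Prop :=
  D d /\ b (Cantor.to_nat (n, code d)) = true.

Definition cantor_base (b : nat -> bool) : X -> Prop :=
  interior X (fun x => forall n, F n x -> closure Y (coded_subset b n) (f x)).

Lemma cantor_base_between (V H U : X -> Prop) (x : X) :
  is_open X V -> V x -> is_closed X H -> subset V H -> subset H U -> is_open X U ->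
  exists b, cantor_base b x /\ subset (cantor_base b) U.
Proof.
  intros HV Vx HH VH HU_H HU.
  destruct (choice (fun n G => covers_trace n H G /\
              ((exists G', separating_open n H U G') -> separating_open n H U G)))
    as [G HG].
  { intro n; destruct (classic (exists G', separating_open n H U G')) as [[G' HG'] | nG].
    - exists G'; split; [exact (proj1 HG') | auto].
    - exists (fun _ => True); split; [split; [apply open_full | auto] | contradiction]. }
  destruct (encode_countable_family Y D code G code_inj) as [b Hb].
  assert (coded_sub : forall n, subset (coded_subset b n) (G n)).
  { intros n d [Dd bd]; apply (Hb n d Dd), bd. }
  exists b; split.
  - exists V; repeat split; auto.
    intros z Vz n Fz.
    destruct (HG n) as [[HGn FHG] _].
    apply (closure_monotone Y (fun d => D d /\ G n d)).
    + intros d [Dd Gd]; split; [exact Dd | apply (Hb n d Dd), Gd].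
    + apply closure_dense_inter_open; auto.
  - intros y Hy; apply NNPP; intro nUy.
    destruct (exists_separating_open H U y HU HH HU_H nUy) as [n [Fy Hsep]].
    apply nUy, (proj2 (proj2 (HG n) Hsep) y Fy).
    exact (closure_monotone Y _ _ (coded_sub n) _ (interior_subset X _ y Hy n Fy)).
Qed.

End CantorIndexedBase.

Theorem theorem4 (X : TopSpace) :
  regular X -> lindelof_sigma X ->
  (exists (Y : TopSpace) (f : X -> Y), hausdorff Y /\ separable Y /\ embedding X Y f) ->
  weight_le_c X.
Proof.
  intros Hreg [_ [F [Ccal [_ [HC [Hcover Hnetwork]]]]]]
    [Y [f [HY [[D [[code code_inj] HD]] [f_inj [f_cont _]]]]]].
  exists (cantor_base X Y f F D code); split.
  - intro b; apply is_open_interior.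
  - intros U x HU Ux.
    destruct (regular_closed_nbhd X U x Hreg HU Ux) as [V [H [HV [Vx [HH [VH HU_H]]]]]].
    destruct (cantor_base_between X Y f HY f_cont f_inj F Ccal
                (fun C CC => proj2 (HC C CC)) Hcover Hnetwork D code code_inj HD
                V H U x HV Vx HH VH HU_H HU) as [b [Hx HbU]].
    eauto.
Qed.
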